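(* For every integer $k\geq 1$, the following identity of formal power series in $q$ holds: \[ \sum_{n\geq 0} b(n,k)\, q^n=\frac{1}{1-q}\left(\sum_{t\geq 1} q^{\binom{t}{2}k^2}\,\frac{1-q^{tk^2}}{1-q^{tk}}-1\right). \]
   Context: A partition $\lambda=(\lambda_1\geq\lambda_2\geq\cdots\geq\lambda_r>0)$ of $n$ is identified with its Young diagram. For a cell $u$ of the Young diagram, the hook length $h_u(\lambda)$ is the number of cells $v$ of the diagram with $v=u$, or $v$ below $u$ in the same column, or $v$ to the right of $u$ in the same row. For $k\geq 1$, $\alpha_k(\lambda)$ denotes the number of cells of the Young diagram of $\lambda$ whose hook length equals $k$ (the number of $k$-hooks of $\lambda$). Let $P(n)$ be the set of partitions of $n$ (with $P(0)$ containing only the empty partition), and $b(n,k)=\max\{\alpha_k(\lambda)\colon \lambda\in P(n)\}$. *)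

From mathcomp Require Import all_boot all_order all_algebra.
Set Implicit Arguments. Unset Strict Implicit. Unset Printing Implicit Defensive.
Import GRing.Theory Num.Theory.

Definition is_partition (l : seq nat) : bool :=
  sorted (fun x y => y <= x) l && all (fun x => 0 < x) l.

Definition partition_of (n : nat) (l : seq nat) : bool :=
  is_partition l && (sumn l == n).

(* Cell (i,j) (row i, column j, 0-indexed) lies in the Young diagram of l
   iff i < size l and j < nth 0 l i.  Its hook length: cells in the same row
   weakly to the right (nth 0 l i - j, including the cell itself) plus cells
   strictly below in the same column (rows r > i with l_r > j). *)
Definition hook (l : seq nat) (i j : nat) : nat :=
  (nth 0 l i - j) + count (fun r => j < r) (drop i.+1 l).

Definition alpha (k : nat) (l : seq nat) : nat :=
  \sum_(i < size l) \sum_(j < nth 0 l i) (hook l i j == k : nat).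

(* Every partition of n has at most n parts, each at most n, so it is
   obtained (uniquely) from an n-tuple of values in {0..n} by deleting zeros.
   This gives a finite index set for the maximum over P(n). *)
Definition tseq (n : nat) (s : n.-tuple 'I_n.+1) : seq nat :=
  filter (fun x => 0 < x) (map val s).

Definition b (n k : nat) : nat :=
  \max_(s : n.-tuple 'I_n.+1 | partition_of n (tseq s)) alpha k (tseq s).

Local Open Scope ring_scope.

Definition fps := nat -> int.

Definition fps_one : fps := fun n => if n == 0%N then 1 else 0.
Definition fps_mono (m : nat) : fps := fun n => if n == m then 1 else 0.
Definition fps_add (f g : fps) : fps := fun n => f n + g n.
Definition fps_sub (f g : fps) : fps := fun n => f n - g n.
Definition fps_mul (f g : fps) : fps :=
  fun n => \sum_(i < n.+1) f i * g (n - i)%N.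
Definition fps_pow (f : fps) (j : nat) : fps := iter j (fps_mul f) fps_one.
(* Inverse of a series g with constant term 1:  1/g = sum_{j>=0} (1-g)^j,
   which is locally finite since (1-g)^j has order >= j. *)
Definition fps_inv (g : fps) : fps :=
  fun n => \sum_(j < n.+1) fps_pow (fps_sub fps_one g) j n.
Definition fps_div (f g : fps) : fps := fps_mul f (fps_inv g).

(* Convergence of an infinite sum sum_{t>=1} F t to S in the usual
   (q-adic) topology of formal power series: every coefficient of the
   partial sums is eventually constant equal to that of S. *)
Definition fps_sum_from1 (F : nat -> fps) (S : fps) : Prop :=
  forall n : nat, exists N : nat, forall M : nat, (N <= M)%N ->
    \sum_(1 <= t < M) F t n = S n.

From mathcomp Require Import all_boot all_order all_algebra zify ring.
Import GRing.Theory Num.Theory.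
Set Implicit Arguments. Unset Strict Implicit. Unset Printing Implicit Defensive.

(* A partition is encoded by its beta-set, the hook lengths of its first
   column; its k-hooks are the beads z of the beta-set such that z - k is an
   empty position.  Placing the beta-set on an abacus with k runners turns
   them into beads that can move one step along their runner, and a runner
   with r beads of which c can move has weight at least C(r,2) + C(c+1,2).
   Summing over the runners and using convexity shows that a partition with
   m k-hooks, m = qk + i and i < k, has size at least
   min_size k m = k^2 C(q+1,2) + k(q+1)i, while explicit abacus configurations
   attain every m with min_size k m <= n.
   Hence b(n,k) is the number of m >= 1 with min_size k m <= n; writing
   m = (t-1)k + i, these sizes are the exponents C(t,2)k^2 + tki of the
   series, and dividing by 1 - q counts those that are at most n. *)

(** * Beta-sets and k-hooks *)

Fixpoint beta_set (l : seq nat) : seq nat :=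
  if l is x :: l' then (x + size l') :: beta_set l' else [::].

Definition top_alpha (k x : nat) (l : seq nat) : nat :=
  \sum_(j < x) (x - j + count (fun r => j < r) l == k).

Definition movable (k : nat) (X : seq nat) : nat :=
  count (fun z => (k <= z) && (z - k \notin X)) X.

Lemma alpha_cons k x l : alpha k (x :: l) = top_alpha k x l + alpha k l.
Proof.
rewrite /alpha /= big_ord_recl /=; congr (_ + _).
by apply: eq_bigr => j _; rewrite /hook /= drop0.
Qed.

Lemma size_beta_set l : size (beta_set l) = size l.
Proof. by elim: l => //= x l ->. Qed.

Lemma sumn_beta_set l : sumn (beta_set l) = sumn l + 'C(size l, 2).
Proof. by elim: l => //= x l ->; rewrite binS bin1; lia. Qed.

Lemma beta_set_lt x l : sorted geq (x :: l) ->
  {in beta_set l, forall z, z < x + size l}.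
Proof.
elim: l x => [|y l IH] x //= /andP[yx sl] z.
rewrite inE addnS => /predU1P[->|/(IH y sl)]; first by rewrite ltnS leq_add2r.
move=> h; apply/ltnW/(leq_trans h); by rewrite leq_add2r.
Qed.

Lemma beta_set_uniq l : sorted geq l -> uniq (beta_set l).
Proof.
elim: l => [|x l IH] //= sl; rewrite IH ?(path_sorted sl) // andbT.
by apply/negP => /(beta_set_lt sl); rewrite ltnn.
Qed.

Lemma sum_sub_eq n k : \sum_(j < n) (n - j == k) = (0 < k) && (k <= n).
Proof.
elim: n => [|n IH]; first by rewrite big_ord0; case: k.
rewrite big_ord_recl subn0 (eq_bigr (fun j : 'I_n => (n - j == k) : nat)) ?IH.
  by case: k {IH} => [|k] //=; rewrite ltnS eqSS; case: ltngtP.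
by move=> j _; rewrite subSS.
Qed.

(* In the row [x], the cells of columns [j >= y] have nothing below them, and
   each cell of a column [j < y] has a hook [x - y + 1] longer than the cell
   below it in the row [y]. *)
Lemma top_alpha_cons k x y l : sorted geq (x :: y :: l) ->
  top_alpha k x (y :: l) =
  ((0 < k) && (k <= x - y)) + (x - y + 1 < k) * top_alpha (k - (x - y + 1)) y l.
Proof.
case/andP=> /= yx sl; have le_y := order_path_min (rev_trans leq_trans) sl.
rewrite /top_alpha.
rewrite -(big_mkord xpredT (fun j => (x - j + count (fun r => j < r) (y :: l) == k) : nat)).
rewrite (big_cat_nat (leq0n y) yx) [RHS]addnC /=; congr (_ + _).
  rewrite big_mkord big_distrr /=; apply: eq_bigr => j _.
  rewrite /= (ltn_ord j) add1n addnS.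
  have jy := ltn_ord j; case: ltnP => kxy; rewrite ?mul1n ?mul0n.
    by congr nat_of_bool; apply/eqP/eqP; lia.
  by apply/eqP; rewrite eqb0; apply/eqP; lia.
rewrite -{1}(add0n y) big_addn big_mkord -sum_sub_eq; apply: eq_bigr => j _.
rewrite ltnNge leq_addl /= add0n subnDA subnAC.
rewrite (eq_in_count (a2 := pred0)) ?count_pred0 ?addn0 // => r /(allP le_y) ry /=.
by apply/negbTE; rewrite -leqNgt (leq_trans ry) ?leq_addl.
Qed.

Lemma top_alpha_beta_set k x l : 0 < k -> sorted geq (x :: l) ->
  top_alpha k x l = (k <= x + size l) && (x + size l - k \notin beta_set l).
Proof.
elim: l k x => [|y l IH] k x k0 sl.
  rewrite /top_alpha (eq_bigr (fun j : 'I_x => (x - j == k) : nat)).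
    by rewrite sum_sub_eq k0 addn0 andbT.
  by move=> j _; rewrite addn0.
rewrite top_alpha_cons //= inE negb_or; case/andP: sl => /= yx sl.
have [kxy|kxy] := ltnP (x - y + 1) k.
  rewrite mul1n IH ?subn_gt0 //.
  rewrite (_ : k <= x - y = false) /=; last by apply/negbTE; rewrite -ltnNge; lia.
  have -> : (k - (x - y + 1) <= y + size l) = (k <= x + (size l).+1).
    by apply/idP/idP; lia.
  have -> : y + size l - (k - (x - y + 1)) = x + (size l).+1 - k by lia.
  rewrite andbF add0n; have [kxl|//] := leqP k (x + (size l).+1).
  by rewrite (_ : x + (size l).+1 - k != y + size l) //; apply/eqP; lia.
rewrite mul0n addn0 k0 /=; have [kxl|kxl] := leqP k (x - y).
  rewrite (_ : k <= x + (size l).+1) /=; last lia.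
  rewrite (_ : x + (size l).+1 - k != y + size l) /=; last by apply/eqP; lia.
  rewrite (_ : x + (size l).+1 - k \notin beta_set l) //.
  by apply/negP => /(beta_set_lt sl); lia.
by rewrite (_ : x + (size l).+1 - k = y + size l) ?eqxx ?andbF //; lia.
Qed.

Lemma alpha_movable k l : 0 < k -> sorted geq l -> alpha k l = movable k (beta_set l).
Proof.
move=> k0; elim: l => [|x l IH] sl; first by rewrite /alpha big_ord0.
rewrite alpha_cons IH ?(path_sorted sl) // top_alpha_beta_set // /movable /= inE negb_or.
congr (_ + _).
  have [kxy|//] := leqP k (x + size l).
  by rewrite (_ : x + size l - k != x + size l) //; apply/eqP; lia.
apply: eq_in_count => z /(beta_set_lt sl) zlt /=; rewrite inE negb_or.
have [kz|//] := leqP k z.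
by rewrite (_ : z - k != x + size l) //; apply/eqP; lia.
Qed.

(** * The abacus with k runners *)

Lemma movable_perm k X X' : perm_eq X X' -> movable k X = movable k X'.
Proof.
move=> pXX'; rewrite /movable (permP pXX'); apply: eq_count => z.
by rewrite (perm_mem pXX').
Qed.

Definition runner (k : nat) (X : seq nat) (j : nat) : seq nat :=
  [seq z %/ k | z <- X & z %% k == j].

Lemma edivn_MDl k a j : j < k -> (a * k + j) %/ k = a /\ (a * k + j) %% k = j.
Proof.
move=> jk; have k0 : 0 < k by case: k jk.
by rewrite divnMDl // divn_small // addn0 modnMDl modn_small.
Qed.

Lemma mem_runner k X j a : j < k -> (a \in runner k X j) = (a * k + j \in X).
Proof.
move=> jk; have [aq ar] := edivn_MDl a jk; apply/mapP/idP.
  by case=> z; rewrite mem_filter => /andP[/eqP <- zX] ->; rewrite -divn_eq.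
by exists (a * k + j); rewrite // mem_filter ar eqxx.
Qed.

Lemma runner_uniq k X j : uniq X -> uniq (runner k X j).
Proof.
move=> uX; rewrite map_inj_in_uniq ?filter_uniq // => z1 z2.
rewrite !mem_filter => /andP[/eqP h1 _] /andP[/eqP h2 _] e.
by rewrite (divn_eq z1 k) (divn_eq z2 k) e h1 h2.
Qed.

Lemma sum_runner k X (F : nat -> nat) : 0 < k ->
  \sum_(z <- X) F z = \sum_(j < k) \sum_(a <- runner k X j) F (a * k + j).
Proof.
move=> k0; rewrite (eq_bigr (fun z => \sum_(j < k) if j == z %% k :> nat then F z else 0)).
  rewrite exchange_big /=; apply: eq_bigr => j _.
  rewrite big_map big_filter_cond [RHS]big_mkcond; apply: eq_big_seq => z _.
  by rewrite andbT eq_sym; case: eqP => // <-; rewrite -divn_eq.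
by move=> z _; rewrite -big_mkcond (big_ord1_eq _ (fun=> F z)) ltn_pmod.
Qed.

Lemma sumn_runner k X : 0 < k ->
  sumn X = \sum_(j < k) (k * sumn (runner k X j) + j * size (runner k X j)).
Proof.
move=> k0; rewrite sumnE (sum_runner _ id k0); apply: eq_bigr => j _.
rewrite sumnE -sum1_size !big_distrr -big_split /=.
by apply: eq_bigr => a _; rewrite muln1 mulnC.
Qed.

Lemma size_runner k X : 0 < k -> size X = \sum_(j < k) size (runner k X j).
Proof.
move=> k0; rewrite -sum1_size (sum_runner _ (fun=> 1) k0).
by apply: eq_bigr => j _; rewrite sum1_size.
Qed.

Lemma movable_runner k X : 0 < k -> movable k X = \sum_(j < k) movable 1 (runner k X j).
Proof.
move=> k0; rewrite /movable -sumn_count sumnE big_map (sum_runner _ _ k0).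
apply: eq_bigr => j _; rewrite -sumn_count sumnE big_map; apply: eq_big_seq => -[|a] _ /=.
  by rewrite mul0n add0n leqNgt ltn_ord.
rewrite mulSn -addnA leq_addr addKn subn1 /= mem_runner //.
Qed.

(** * The size of a partition with m k-hooks *)

Lemma movable1_cons_max y Y : all (fun z => z < y) Y ->
  movable 1 (y :: Y) = ((0 < y) && (y.-1 \notin Y)) + movable 1 Y.
Proof.
move=> ltY; rewrite /movable /= inE negb_or subn1; congr (_ + _).
  by case: y ltY => //= y _; rewrite ltn_eqF.
apply: eq_in_count => -[|a] aY //=; rewrite inE negb_or subn1 /=.
by rewrite ltn_eqF // ltnW // (allP ltY).
Qed.

Lemma all_ltnS_notin y Y :
  all (fun z => z < y.+1) Y -> y \notin Y -> all (fun z => z < y) Y.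
Proof.
move=> ltY yY; apply/allP => z zY; rewrite ltn_neqAle -ltnS (allP ltY) // andbT.
by apply: contraNneq yY => <-.
Qed.

Lemma perm_rem_max y Y : uniq Y -> all (fun z => z < y.+1) Y -> y \in Y ->
  [/\ perm_eq Y (y :: rem y Y), uniq (rem y Y) & all (fun z => z < y) (rem y Y)].
Proof.
move=> uY ltY yY; split; [exact: perm_to_rem | exact: rem_uniq |].
apply: all_ltnS_notin; last by rewrite mem_rem_uniq // inE eqxx.
by apply/allP => z /mem_rem/(allP ltY).
Qed.

(* The beads of [Y] and the empty positions just below its movable beads are
   distinct positions in [0, y). *)
Lemma size_movable1_le y Y : uniq Y -> all (fun z => z < y) Y ->
  size Y + movable 1 Y + ((0 < y) && (y.-1 \notin Y)) <= y.
Proof.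
move: Y; elim: y => [|y IH] Y uY ltY; first by case: Y uY ltY.
have [yY|yY] := boolP (y \in Y); last first.
  by have := IH _ uY (all_ltnS_notin ltY yY); case: ((0 < y) && _) => /=; lia.
have [pY uY' ltY'] := perm_rem_max uY ltY yY.
rewrite (perm_size pY) (movable_perm _ pY) (movable1_cons_max ltY') /=.
by have := IH _ uY' ltY'; case: ((0 < y) && _) => /=; lia.
Qed.

Lemma runner_bound_lt y Y : uniq Y -> all (fun z => z < y) Y ->
  'C(size Y, 2) + 'C(movable 1 Y + 1, 2) <= sumn Y.
Proof.
move: Y; elim: y => [|y IH] Y uY ltY; first by case: Y uY ltY.
have [yY|yY] := boolP (y \in Y); last exact: IH uY (all_ltnS_notin ltY yY).
have [pY uY' ltY'] := perm_rem_max uY ltY yY.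
rewrite (perm_size pY) (movable_perm _ pY) (perm_sumn pY) (movable1_cons_max ltY') /=.
have := IH _ uY' ltY'; have := size_movable1_le uY' ltY'.
case: ((0 < y) && _) => /=; rewrite ?add0n ?add1n ?addSn !binS !bin1; lia.
Qed.

Lemma mem_leq_sumn (s : seq nat) z : z \in s -> z <= sumn s.
Proof.
elim: s => //= x s IH; rewrite inE => /predU1P[->|/IH]; first exact: leq_addr.
by move/leq_trans; apply; apply: leq_addl.
Qed.

Lemma runner_bound Y : uniq Y -> 'C(size Y, 2) + 'C(movable 1 Y + 1, 2) <= sumn Y.
Proof.
move=> uY; apply: (@runner_bound_lt (sumn Y).+1) => //.
by apply/allP => z /mem_leq_sumn.
Qed.

Lemma bin2_mul2 n : 'C(n, 2) * 2 = n * (n - 1).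
Proof. by elim: n => // n IH; rewrite binS bin1 mulnDl IH; nia. Qed.

Lemma bin2D a b : 'C(a + b, 2) = 'C(a, 2) + 'C(b, 2) + a * b.
Proof. by apply/eqP; rewrite -(eqn_pmul2r (isT : 0 < 2)) !mulnDl !bin2_mul2; apply/eqP; nia. Qed.

Lemma bin2M a b : 'C(a * b, 2) = a * a * 'C(b, 2) + b * 'C(a, 2).
Proof.
elim: b => [|b IH]; first by rewrite muln0 (_ : 'C(0, 2) = 0) // muln0.
by rewrite mulnS addnC bin2D IH binS bin1; ring.
Qed.

Lemma mul_le_bin2 a b : a * b <= 'C(a, 2) + 'C(b.+1, 2).
Proof. by rewrite -(leq_pmul2r (isT : 0 < 2)) mulnDl !bin2_mul2; case: (leqP a b); nia. Qed.

Lemma bin2_sum_runners k (r : nat -> nat) :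
  'C(\sum_(j < k) r j, 2) <= k * \sum_(j < k) 'C(r j, 2) + \sum_(j < k) j * r j.
Proof.
elim: k => [|k IH]; first by rewrite !big_ord0.
rewrite !big_ord_recr /= bin2D.
set T := \sum_(j < k) r j; set C := \sum_(j < k) 'C(r j, 2).
set J := \sum_(j < k) j * r j.
have cross : T * r k <= C + k * 'C((r k).+1, 2).
  rewrite /T /C big_distrl -[k in k * _]card_ord -sum_nat_const -big_split /=.
  by apply: leq_sum => j _; apply: mul_le_bin2.
by move: IH cross; rewrite -/T -/C -/J binS bin1; nia.
Qed.

Definition min_size (k m : nat) : nat :=
  k * k * 'C(m %/ k + 1, 2) + k * (m %/ k + 1) * (m %% k).

(* Convexity of [c |-> 'C(c + 1, 2)]: it lies above the line through its
   values at [q] and [q + 1]. *)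
Lemma min_size_le_sum k (c : nat -> nat) : 0 < k ->
  min_size k (\sum_(j < k) c j) <= k * \sum_(j < k) 'C(c j + 1, 2).
Proof.
move=> k0; rewrite /min_size; set m := \sum_(j < k) c j.
set q := m %/ k; set i := m %% k; have em : m = q * k + i by apply: divn_eq.
have tangent : (q + 1) * m <= \sum_(j < k) 'C(c j + 1, 2) + k * 'C(q + 1, 2).
  rewrite /m big_distrr -[k in k * _]card_ord -sum_nat_const -big_split /=.
  by apply: leq_sum => j _; rewrite !addn1 addnC mul_le_bin2.
by move: tangent; have := bin2_mul2 (q + 1); rewrite em; nia.
Qed.

Lemma min_size_alpha_le k l : 0 < k -> sorted geq l -> min_size k (alpha k l) <= sumn l.
Proof.
move=> k0 sl; set X := beta_set l.
have := sumn_beta_set l; rewrite -/X -(size_beta_set l) -/X (size_runner X k0) => sumnX.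
rewrite alpha_movable // -/X movable_runner //.
apply: leq_trans (min_size_le_sum (fun j => movable 1 (runner k X j)) k0) _.
have bead_cost :
    \sum_(j < k) (k * ('C(size (runner k X j), 2) + 'C(movable 1 (runner k X j) + 1, 2))
                  + j * size (runner k X j)) <= sumn X.
  rewrite (sumn_runner X k0); apply: leq_sum => j _.
  by rewrite leq_add2r leq_pmul2l // runner_bound // runner_uniq // beta_set_uniq.
have := bin2_sum_runners k (fun j => size (runner k X j)).
move: bead_cost sumnX; rewrite big_split /= -big_distrr big_split /= mulnDr.
set S := \sum_(j < k) size _; set C := \sum_(j < k) 'C(size _, 2).
set J := \sum_(j < k) j * _; set M := \sum_(j < k) 'C(_ + 1, 2); lia.
Qed.

(** * Partitions from beta-sets *)

Lemma max_mem (s : seq nat) : s != [::] -> exists2 x, x \in s & all (fun z => z < x.+1) s.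
Proof.
elim: s => // y s IH _; have [-> | /IH[x xs lts]] := eqVneq s [::].
  by exists y; rewrite ?mem_head //= ltnSn.
have [yx | xy] := leqP y x.
  by exists x; rewrite ?inE ?xs ?orbT //= ltnS yx.
exists y; rewrite ?mem_head //= ltnSn /=.
by apply/allP => z /(allP lts); rewrite ltnS => zx; apply: leq_trans zx (ltnW xy).
Qed.

Lemma size_uniq_lt (s : seq nat) x : uniq s -> all (fun z => z < x) s -> size s <= x.
Proof.
move=> us lts; rewrite -(size_iota 0 x) uniq_leq_size // => z /(allP lts) zx.
by rewrite mem_iota.
Qed.

Lemma beta_set_onto X : uniq X -> exists2 l, sorted geq l & perm_eq (beta_set l) X.
Proof.
move: {2}(size X) (erefl (size X)) => n; elim: n X => [|n IH] X sX uX.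
  by exists [::]; case: X sX uX.
have [|x xX ltX] := max_mem (s := X); first by case: X sX uX.
have [pX uX' ltX'] := perm_rem_max uX ltX xX.
have [|l' sl' pl'] := IH (rem x X) _ uX'; first by rewrite size_rem // sX.
have szx : size l' <= x by rewrite -(size_beta_set l') (perm_size pl') size_uniq_lt.
exists ((x - size l') :: l').
  case: l' sl' pl' szx => //= y l sl pl _; rewrite sl andbT.
  have /(allP ltX') /= : y + size l \in rem x X by rewrite -(perm_mem pl) mem_head.
  lia.
by rewrite /= subnK // perm_sym (perm_trans pX) // perm_cons perm_sym.
Qed.

Lemma alpha_filter_pos k l : alpha k [seq x <- l | 0 < x] = alpha k l.
Proof.
elim: l => //= -[|x] l IH /=; rewrite !alpha_cons ?IH //.
  by rewrite /top_alpha big_ord0.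
congr (_ + _); apply: eq_bigr => j _; rewrite count_filter.
by congr (_ + _ == _); apply: eq_count => r /=; case: ltnP => //; case: r.
Qed.

Lemma sumn_filter_pos l : sumn [seq x <- l | 0 < x] = sumn l.
Proof. by elim: l => //= -[|x] l /= ->. Qed.

Lemma partition_of_beta_set k n M X : 0 < k -> uniq X ->
  sumn X = n + 'C(size X, 2) -> M <= movable k X ->
  exists2 l, partition_of n l & M <= alpha k l.
Proof.
move=> k0 uX sumnX leM; have [l sl pl] := beta_set_onto uX.
exists [seq x <- l | 0 < x].
  rewrite /partition_of /is_partition sumn_filter_pos filter_all sorted_filter //=.
    by move: sumnX; rewrite -(perm_sumn pl) -(perm_size pl) sumn_beta_set size_beta_set; lia.
  exact: rev_trans leq_trans.
by rewrite alpha_filter_pos alpha_movable // (movable_perm _ pl).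
Qed.

(** * Attaining the bound *)

Definition parity_beads (c : bool) (s : nat) : seq nat := [seq b.*2 + c | b <- iota 0 s].

Lemma mem_parity_beads c s a : (a \in parity_beads c s) = (odd a == c) && (a < s.*2).
Proof.
apply/mapP/andP => [[b] | [/eqP oa as2]].
  by rewrite mem_iota add0n => bs ->; rewrite oddD odd_double oddb /= -!muln2; case: c; lia.
exists a./2; last by rewrite -oa addnC odd_double_half.
by move: as2; rewrite mem_iota add0n -(odd_double_half a) -!muln2; case: (odd a); lia.
Qed.

Lemma parity_beads_uniq c s : uniq (parity_beads c s).
Proof. by rewrite map_inj_uniq ?iota_uniq // => a b /addIn /double_inj. Qed.

Lemma size_parity_beads c s : size (parity_beads c s) = s.
Proof. by rewrite size_map size_iota. Qed.

Lemma sumn_parity_beads c s : sumn (parity_beads c s) = s * (s - 1) + c * s.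
Proof.
elim: s => [|s IH]; first by rewrite muln0.
rewrite /parity_beads -addn1 iotaD map_cat sumn_cat -/(parity_beads c s).
by rewrite IH /= add0n addn0 -muln2; case: c {IH}; nia.
Qed.

Lemma movable1_parity_beads c s : movable 1 (parity_beads c s) = s - ~~ c.
Proof.
rewrite /movable (eq_in_count (a2 := fun a => 0 < a)); last first.
  move=> -[|a] //; rewrite mem_parity_beads subn1 /= => /andP[/eqP <- _].
  by rewrite mem_parity_beads negb_and /=; case: (odd a).
rewrite /parity_beads count_map /=; case: c => /=.
  by rewrite (eq_count (a2 := predT)) ?count_predT ?size_iota ?subn0 // => b; rewrite /= addnS.
case: s => // s; rewrite /= add0n (eq_in_count (a2 := predT)) ?count_predT ?size_iota ?subn1 //.
by move=> b; rewrite mem_iota /= addn0 double_gt0 => /andP[].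
Qed.

Lemma sum_ord_eq N c : \sum_(j < N) ((j == c :> nat) : nat) = (c < N).
Proof.
rewrite (eq_bigr (fun j : 'I_N => if j == c :> nat then 1 else 0)) -?big_mkcond.
  by rewrite (big_ord1_eq _ (fun=> 1)); case: ltnP.
by move=> j _; case: eqP.
Qed.

Lemma sum_ord_mul_eq N c : \sum_(j < N) j * (j == c :> nat) = (c < N) * c.
Proof.
rewrite (eq_bigr (fun j : 'I_N => if j == c :> nat then j : nat else 0)) -?big_mkcond.
  by rewrite (big_ord1_eq _ (fun j => j) c N); case: ltnP; rewrite ?mul1n ?mul0n.
by move=> j _; case: eqP; rewrite ?muln1 ?muln0.
Qed.

Lemma sum_ord_lt N c : \sum_(j < N) ((j < c) : nat) = minn N c.
Proof. by elim: N => [|N IH]; rewrite ?big_ord0 ?min0n // big_ord_recr /= IH; case: ltnP; lia. Qed.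

(* A beta-set with [(q * k + i).+1] movable beads whose partition has size
   [min_size k (q * k + i).+1 + w * k + d]: each runner carries [q.+1] beads at
   alternate positions, starting at 1 on the first [i] runners other than [d]
   and at 0 on the others, and runner [d] gets an extra bead at [q.*2 + 2 + w]. *)
Section Construction.

Variables (k q i w d : nat).
Hypotheses (ik : i < k) (dk : d < k).

Let k_gt0 : 0 < k := leq_ltn_trans (leq0n i) ik.

Definition odd_runner (j : nat) : bool := if d < i then (j <= i) && (j != d) else j < i.

Definition top_bead : nat := q.*2 + 2 + w.

Definition runner_beads (j : nat) : seq nat :=
  if j == d then top_bead :: parity_beads (odd_runner j) q.+1
  else parity_beads (odd_runner j) q.+1.

Definition abacus : seq nat :=
  [seq z <- iota 0 (top_bead.+1 * k) | z %/ k \in runner_beads (z %% k)].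

Lemma odd_runner_d : odd_runner d = false.
Proof. by rewrite /odd_runner; case: ifP => [_|->]; rewrite ?eqxx ?andbF. Qed.

Lemma sum_odd_runner : \sum_(j < k) (odd_runner j : nat) = i.
Proof.
rewrite /odd_runner; case: ltnP => di; last by rewrite sum_ord_lt; lia.
have : \sum_(j < k) (((j <= i) && (j != d :> nat)) + (j == d :> nat)) = minn k i.+1.
  rewrite -sum_ord_lt; apply: eq_bigr => j _; rewrite ltnS.
  by case: eqP => [->|_]; [rewrite (ltnW di) | rewrite andbT addn0].
by rewrite big_split /= sum_ord_eq dk; lia.
Qed.

Lemma parity_beads_lt_top c : all (fun z => z < top_bead) (parity_beads c q.+1).
Proof. by apply/allP => z; rewrite mem_parity_beads /top_bead -!muln2 => /andP[_]; lia. Qed.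

Lemma runner_beads_uniq j : uniq (runner_beads j).
Proof.
rewrite /runner_beads; case: eqP => _; last exact: parity_beads_uniq.
rewrite cons_uniq parity_beads_uniq andbT.
by apply/negP => /(allP (parity_beads_lt_top _)); rewrite ltnn.
Qed.

Lemma runner_beads_le_top j : all (fun z => z <= top_bead) (runner_beads j).
Proof.
apply/allP => z; have /allP lt_top := parity_beads_lt_top (odd_runner j).
rewrite /runner_beads; case: eqP => _; last by move/lt_top/ltnW.
by rewrite inE => /predU1P[->//|/lt_top/ltnW].
Qed.

Lemma size_runner_beads j : size (runner_beads j) = (j == d) + q.+1.
Proof. by rewrite /runner_beads; case: eqP => _; rewrite -1?cat1s ?size_cat size_parity_beads. Qed.

Lemma sumn_runner_beads j :
  sumn (runner_beads j) = (j == d) * top_bead + q.+1 * q + odd_runner j * q.+1.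
Proof.
rewrite /runner_beads.
by case: eqP => _; rewrite -1?cat1s ?sumn_cat sumn_parity_beads subn1 /=; lia.
Qed.

Lemma top_bead_movable : top_bead.-1 \notin parity_beads false q.+1.
Proof.
rewrite mem_parity_beads /top_bead -!muln2 negb_and.
case: w => [|w']; first by rewrite addn0 addn2 /= oddM andbF.
by apply/orP; right; rewrite -ltnNge; lia.
Qed.

Lemma movable1_runner_beads j : movable 1 (runner_beads j) = (j == d) + q + odd_runner j.
Proof.
rewrite /runner_beads; case: eqP => [->|_]; last first.
  by rewrite movable1_parity_beads; case: odd_runner; rewrite /= ?subn0 ?subn1; lia.
rewrite (movable1_cons_max (parity_beads_lt_top _)) movable1_parity_beads odd_runner_d.
by rewrite top_bead_movable /top_bead addn2 addSn /= subn1 addn0.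
Qed.

Lemma abacus_uniq : uniq abacus.
Proof. exact/filter_uniq/iota_uniq. Qed.

Lemma perm_runner_abacus j : j < k -> perm_eq (runner k abacus j) (runner_beads j).
Proof.
move=> jk; apply: uniq_perm; [exact/runner_uniq/abacus_uniq | exact: runner_beads_uniq |].
move=> a; rewrite mem_runner // mem_filter mem_iota add0n.
have [-> ->] := edivn_MDl a jk; apply/andP/idP => [[]//|aR]; split=> //.
by have := allP (runner_beads_le_top j) a aR; nia.
Qed.

Lemma size_abacus : size abacus = (k * q.+1).+1.
Proof.
rewrite (size_runner _ k_gt0) (eq_bigr (fun j : 'I_k => (j == d :> nat) + q.+1)).
  by rewrite big_split /= sum_ord_eq dk sum_nat_const card_ord; lia.
by move=> j _; rewrite (perm_size (perm_runner_abacus (ltn_ord j))) size_runner_beads.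
Qed.

Lemma movable_abacus : movable k abacus = (q * k + i).+1.
Proof.
rewrite (movable_runner _ k_gt0) (eq_bigr (fun j : 'I_k => (j == d :> nat) + q + odd_runner j)).
  by rewrite !big_split /= sum_ord_eq dk sum_nat_const card_ord sum_odd_runner; lia.
by move=> j _; rewrite (movable_perm _ (perm_runner_abacus (ltn_ord j))) movable1_runner_beads.
Qed.

Lemma sumn_abacus :
  sumn abacus = k * (top_bead + k * (q.+1 * q) + i * q.+1) + (d + q.+1 * 'C(k, 2)).
Proof.
rewrite (sumn_runner _ k_gt0).
rewrite (eq_bigr (fun j : 'I_k =>
    k * ((j == d :> nat) * top_bead + q.+1 * q + odd_runner j * q.+1)
    + (j * (j == d :> nat) + j * q.+1))); last first.
  move=> j _; have pj := perm_runner_abacus (ltn_ord j).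
  by rewrite (perm_sumn pj) (perm_size pj) sumn_runner_beads size_runner_beads; ring.
rewrite big_split /= -big_distrr !big_split /= -!big_distrl /= sum_ord_eq dk.
rewrite !sum_nat_const card_ord sum_odd_runner sum_ord_mul_eq dk !mul1n.
by rewrite -(big_mkord xpredT (fun j => j)) bin2_sum; ring.
Qed.

End Construction.

Lemma min_size_MDl k q i : i < k ->
  min_size k (q * k + i) = k * k * 'C(q + 1, 2) + k * (q + 1) * i.
Proof. by move=> ik; have [e1 e2] := edivn_MDl q ik; rewrite /min_size e1 e2. Qed.

Lemma min_size0 k : min_size k 0 = 0.
Proof. by rewrite /min_size div0n mod0n muln0 addn0 (_ : 'C(0 + 1, 2) = 0) // muln0. Qed.

Lemma sumn_abacus_min_size k q i w d : i < k ->
  k * (top_bead q w + k * (q.+1 * q) + i * q.+1) + (d + q.+1 * 'C(k, 2))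
  = min_size k (q * k + i).+1 + w * k + d + 'C((k * q.+1).+1, 2).
Proof.
move=> ik; rewrite /top_bead binS bin1 bin2M -muln2.
have -> : q.+1 * q = 'C(q.+1, 2) * 2 by rewrite bin2_mul2 subn1 mulnC.
have [ik' | ki] := ltnP i.+1 k.
  rewrite -addnS min_size_MDl // addn1; move: ('C(q.+1, 2)) ('C(k, 2)) => a b; ring.
have ei : i.+1 = k by lia.
have -> : (q * k + i).+1 = q.+1 * k + 0 by rewrite mulSn; lia.
have e2 : 'C(q.+1 + 1, 2) = 'C(q.+1, 2) + q.+1 by rewrite addn1 binS bin1.
rewrite min_size_MDl ?e2 -?ei; [move: ('C(q.+1, 2)) ('C(i.+1, 2)) => a b; ring | lia].
Qed.

Lemma partition_ones n : partition_of n (nseq n 1).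
Proof.
rewrite /partition_of /is_partition sumn_nseq mul1n eqxx andbT.
apply/andP; split; last by apply/allP => x /nseqP[->].
by elim: n => // -[|n] //= ->.
Qed.

Lemma alpha_attained k n M : 0 < k -> min_size k M <= n ->
  exists2 l, partition_of n l & M <= alpha k l.
Proof.
move=> k0; case: M => [|m] lemn; first by exists (nseq n 1); rewrite ?partition_ones.
set q := m %/ k; set i := m %% k; have ik : i < k by rewrite ltn_pmod.
set w := (n - min_size k m.+1) %/ k; set d := (n - min_size k m.+1) %% k.
have dk : d < k by rewrite ltn_pmod.
have em : m = q * k + i by apply: divn_eq.
have en : n = min_size k m.+1 + w * k + d by rewrite -addnA -divn_eq subnKC.
apply: (partition_of_beta_set k0 (abacus_uniq k q i w d)).
  by rewrite sumn_abacus // size_abacus // sumn_abacus_min_size // -em -en.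
by rewrite movable_abacus // -em.
Qed.

(** * b(n,k) as a count *)

Lemma leq_min_size k m : 0 < k -> m <= min_size k m.
Proof.
move=> k0; rewrite {1}(divn_eq m k) /min_size; set q := m %/ k; set i := m %% k.
have ik : i < k by rewrite ltn_pmod.
have hq : q <= 'C(q + 1, 2) by rewrite addn1 binS bin1 leq_addl.
have : q * k <= k * k * 'C(q + 1, 2) by rewrite mulnC leq_mul // leq_pmull.
nia.
Qed.

Lemma min_size_leS k m : 0 < k -> min_size k m <= min_size k m.+1.
Proof.
move=> k0; rewrite {1}(divn_eq m k); set q := m %/ k; set i := m %% k.
have ik : i < k by rewrite ltn_pmod.
have em : m.+1 = q * k + i.+1 by rewrite {1}(divn_eq m k) addnS.
rewrite min_size_MDl // em; have [ik' | ki] := ltnP i.+1 k.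
  by rewrite min_size_MDl // leq_add2l leq_mul2l leqnSn orbT.
have -> : q * k + i.+1 = q.+1 * k + 0 by rewrite mulSn; lia.
have e2 : 'C(q.+2, 2) = 'C(q.+1, 2) + q.+1 by rewrite binS bin1.
rewrite min_size_MDl // muln0 addn0 !addn1 e2 mulnDr leq_add2l; nia.
Qed.

Lemma min_size_mono k : 0 < k -> {homo min_size k : m p / m <= p}.
Proof.
move=> k0 m p /subnK <-; elim: (p - m) => //= t IH.
exact: leq_trans IH (min_size_leS _ k0).
Qed.

Definition b_count (k n : nat) : nat := \sum_(1 <= m < n.+1) (min_size k m <= n).

Lemma leq_b_count k n m : 0 < k -> min_size k m <= n -> m <= b_count k n.
Proof.
move=> k0 lemn; have mn := leq_trans (leq_min_size m k0) lemn.
rewrite /b_count (big_cat_nat (n := m.+1)) //= ?ltnS //.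
apply: leq_trans (leq_addr _ _); rewrite big_nat_cond (eq_bigr (fun=> 1)).
  by rewrite -big_nat_cond sum_nat_const_nat; lia.
by move=> j /andP[/andP[_ jm] _]; rewrite (leq_trans (min_size_mono k0 (jm : j <= m))).
Qed.

Lemma sum_nat_lt a N M : \sum_(a <= m < N) (m < M) <= M - a.
Proof.
elim: N => [|N IH]; first by rewrite big_geq.
have [aN|Na] := leqP a N; last by rewrite big_geq.
rewrite big_nat_recr //=; case: (ltnP N M) => NM /=; last by rewrite addn0 IH.
rewrite (eq_big_nat _ _ (F2 := fun=> 1)) ?sum_nat_const_nat; first lia.
by move=> j /andP[_ jN]; rewrite (ltn_trans jN NM).
Qed.

Lemma min_size_b_count k n : 0 < k -> min_size k (b_count k n) <= n.
Proof.
move=> k0; set M := b_count k n; have [//|ltnM] := leqP (min_size k M) n.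
have M0 : 0 < M by move: ltnM; rewrite lt0n; apply: contraTneq => ->; rewrite min_size0.
suff : M <= M - 1 by lia.
rewrite {1}/M /b_count; apply: leq_trans (sum_nat_lt 1 n.+1 M).
rewrite big_nat_cond [X in _ <= X]big_nat_cond; apply: leq_sum => j _.
have [lejn|//] := leqP (min_size k j) n; case: (ltnP j M) => // /(min_size_mono k0); lia.
Qed.

Lemma size_le_sumn_pos (l : seq nat) : all (fun x => 0 < x) l -> size l <= sumn l.
Proof. by elim: l => //= x l IH /andP[x0 /IH]; lia. Qed.

Lemma tseq_onto n l : partition_of n l -> exists s : n.-tuple 'I_n.+1, tseq s = l.
Proof.
case/andP=> /andP[_ l_pos] /eqP sumnl.
have szl : size l <= n by rewrite -sumnl size_le_sumn_pos.
set s := [seq inord x : 'I_n.+1 | x <- l ++ nseq (n - size l) 0].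
have sz_s : size s == n by rewrite size_map size_cat size_nseq subnKC.
exists (Tuple sz_s); rewrite /tseq /= -map_comp map_id_in; last first.
  move=> x; rewrite mem_cat => /orP[xl | /nseqP[-> _]]; last by rewrite /= inordK.
  by rewrite /= inordK // ltnS -sumnl mem_leq_sumn.
rewrite filter_cat (eq_in_filter (a2 := predT)) ?filter_predT; last exact/allP.
by rewrite (eq_in_filter (a2 := pred0)) ?filter_pred0 ?cats0 // => x /nseqP[->].
Qed.

Lemma b_eq_b_count n k : 0 < k -> b n k = b_count k n.
Proof.
move=> k0; apply/eqP; rewrite eqn_leq; apply/andP; split.
  apply/bigmax_leqP => s /andP[/andP[sorted_s _] /eqP sumn_s].
  by apply: leq_b_count => //; have := min_size_alpha_le k0 sorted_s; rewrite sumn_s.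
have [l pl lel] := alpha_attained k0 (min_size_b_count n k0).
have [s ls] := tseq_onto pl; rewrite -ls in pl lel.
by apply: leq_trans lel _; apply: leq_bigmax_cond.
Qed.

(** * The generating function *)

Definition summand_coef (k t n : nat) : nat :=
  \sum_(i < k) (n == 'C(t, 2) * k ^ 2 + t * k * i : nat).

Lemma summand_coef_eq0 k t n : 0 < k -> n.+2 <= t -> summand_coef k t n = 0.
Proof.
move=> k0 tn; have ht : t.-1 <= 'C(t, 2) by case: t tn => // t _; rewrite binS bin1 leq_addl.
have hk : 'C(t, 2) <= 'C(t, 2) * k ^ 2 by rewrite leq_pmulr // expn_gt0 k0.
by apply: big1 => i _; apply/eqP; rewrite eqb0; apply/eqP; lia.
Qed.

Lemma sum_ord_divn_modn k T (F : nat -> nat -> nat) : 0 < k ->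
  \sum_(1 <= t < T.+1) \sum_(i < k) F t i = \sum_(0 <= m < T * k) F (m %/ k).+1 (m %% k).
Proof.
move=> k0; elim: T => [|T IH]; first by rewrite !big_geq.
rewrite big_nat_recr //= IH [RHS](big_cat_nat (n := T * k)) ?leq_mul //; congr (_ + _).
rewrite -{1}(add0n (T * k)) big_addn mulSn addnK big_mkord; apply: eq_bigr => i _.
by rewrite addnC; have [-> ->] := edivn_MDl T (ltn_ord i).
Qed.

Lemma sum_summand_coef k n : 0 < k ->
  \sum_(j < n.+1) \sum_(1 <= t < j.+2) summand_coef k t j = (b_count k n).+1.
Proof.
move=> k0.
rewrite (eq_bigr (fun j : 'I_n.+1 => \sum_(1 <= t < n.+2) summand_coef k t j)); last first.
  move=> j _; rewrite [RHS](big_cat_nat (n := j.+2)) //=; last by have := ltn_ord j.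
  rewrite [X in _ = _ + X]big_nat_cond [X in _ = _ + X]big1 ?addn0 // => t.
  by case/andP=> /andP[jt _] _; apply: summand_coef_eq0.
rewrite exchange_big /=.
rewrite (eq_bigr (fun t => \sum_(i < k) ('C(t, 2) * k ^ 2 + t * k * i <= n : nat))); last first.
  move=> t _; rewrite /summand_coef exchange_big /=; apply: eq_bigr => i _.
  by rewrite sum_ord_eq ltnS.
rewrite (sum_ord_divn_modn _ (fun t i => ('C(t, 2) * k ^ 2 + t * k * i <= n : nat)) k0).
rewrite (eq_bigr (fun m => (min_size k m <= n : nat))); last first.
  by move=> m _; rewrite /min_size addn1 -mulnn; congr (nat_of_bool (_ <= n)); ring.
rewrite big_ltn ?muln_gt0 ?k0 // min_size0 add1n (big_cat_nat (n := n.+1)) ?leq_pmulr //=.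
rewrite [X in _ + X]big_nat_cond [X in _ + X]big1 ?addn0 // => m /andP[/andP[nm _] _].
by apply/eqP; rewrite eqb0 -ltnNge (leq_trans nm) ?leq_min_size.
Qed.

Local Open Scope ring_scope.

Lemma fps_mul_monoE c (F : fps) n :
  fps_mul (fps_mono c) F n = if (c <= n)%N then F (n - c)%N else 0.
Proof.
rewrite /fps_mul /fps_mono (eq_bigr (fun i : 'I_n.+1 => if i == c :> nat then F (n - c)%N else 0)).
  by rewrite -big_mkcond (big_ord1_eq _ (fun=> F (n - c)%N)) ltnS.
by move=> i _; case: eqP => [->|_]; rewrite ?mul1r ?mul0r.
Qed.

Lemma fps_mul1E (F : fps) n : fps_mul fps_one F n = F n.
Proof. by have := fps_mul_monoE 0 F n; rewrite subn0. Qed.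

Lemma eq_fps_pow (F G : fps) j : F =1 G -> fps_pow F j =1 fps_pow G j.
Proof.
move=> eFG; elim: j => // j IH n; rewrite /fps_pow !iterS -!/(fps_pow _ j) /fps_mul.
by apply: eq_bigr => i _; rewrite eFG IH.
Qed.

Lemma fps_pow_mono a j : fps_pow (fps_mono a) j =1 fps_mono (a * j).
Proof.
elim: j => [|j IH] n; first by rewrite muln0.
rewrite /fps_pow iterS -/(fps_pow _ j) fps_mul_monoE mulnS /fps_mono.
case: leqP => an; first by rewrite IH /fps_mono; congr (if _ then _ else _); apply/eqP/eqP; lia.
by case: eqP => //; lia.
Qed.

Lemma fps_inv_one_sub_mono a n : (0 < a)%N ->
  fps_inv (fps_sub fps_one (fps_mono a)) n = if (a %| n)%N then 1 else 0.
Proof.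
move=> a0; have one_sub2 : fps_sub fps_one (fps_sub fps_one (fps_mono a)) =1 fps_mono a.
  by move=> m; rewrite /fps_sub opprB addrC subrK.
set e : int := if (a %| n)%N then 1 else 0.
rewrite /fps_inv (eq_bigr (fun j : 'I_n.+1 => if j == (n %/ a)%N :> nat then e else 0)).
  by rewrite -big_mkcond (big_ord1_eq _ (fun=> e)) ltnS leq_div.
move=> j _; rewrite (eq_fps_pow _ one_sub2) fps_pow_mono /fps_mono /e.
case: (boolP (a %| n)%N) => [dvd | ndvd].
  by rewrite -{1}(divnK dvd) mulnC eqn_pmul2l // eq_sym.
by rewrite if_same; case: eqP => // en; rewrite en dvdn_mulr in ndvd.
Qed.

Lemma fps_mul_one_sub_monoE u (F : fps) n :
  fps_mul (fps_sub fps_one (fps_mono u)) F n = F n - (if (u <= n)%N then F (n - u)%N else 0).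
Proof.
rewrite /fps_mul.
rewrite (eq_bigr (fun i : 'I_n.+1 => fps_one i * F (n - i)%N - fps_mono u i * F (n - i)%N)).
  by rewrite sumrB; congr (_ - _); [apply: fps_mul1E | apply: fps_mul_monoE].
by move=> i _; rewrite /fps_sub mulrBl.
Qed.

Lemma sum_ord_eq_mul v k n : (0 < v)%N ->
  (\sum_(i < k) (n == v * i : nat) = (v %| n) && (n %/ v < k))%N.
Proof.
move=> v0; case: (boolP (v %| n)%N) => [dvd | ndvd]; last first.
  by apply: big1 => i _; apply/eqP; rewrite eqb0; apply: contra ndvd => /eqP ->; apply: dvdn_mulr.
rewrite -sum_ord_eq; apply: eq_bigr => i _.
by rewrite -{1}(divnK dvd) mulnC eqn_pmul2l // eq_sym.
Qed.

Lemma fps_div_geom v k n : (0 < v)%N -> (0 < k)%N ->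
  fps_div (fps_sub fps_one (fps_mono (v * k))) (fps_sub fps_one (fps_mono v)) n
  = (\sum_(i < k) (n == v * i : nat))%N%:Z.
Proof.
move=> v0 k0; rewrite sum_ord_eq_mul // /fps_div fps_mul_one_sub_monoE.
rewrite !fps_inv_one_sub_mono ?muln_gt0 ?v0 // ltn_divLR // mulnC.
case: (boolP (v %| n)%N) => [dvd | ndvd]; case: leqP => vkn //=; rewrite ?subr0 //.
  by rewrite dvdn_sub ?dvdn_mull // subrr.
by rewrite dvdn_subl ?dvdn_mull // (negbTE ndvd) subr0.
Qed.

Lemma summand_coefE k t n : (0 < k)%N -> (0 < t)%N ->
  fps_mul (fps_mono ('C(t, 2) * k ^ 2))
    (fps_div (fps_sub fps_one (fps_mono (t * k ^ 2))) (fps_sub fps_one (fps_mono (t * k)))) n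
  = (summand_coef k t n)%:Z.
Proof.
move=> k0 t0; rewrite fps_mul_monoE -mulnn !mulnA fps_div_geom ?muln_gt0 ?t0 //.
rewrite /summand_coef -mulnn !mulnA; case: leqP => Cn; congr Posz.
  by apply: eq_bigr => i _; congr nat_of_bool; apply/eqP/eqP; lia.
by apply/esym/big1 => i _; apply/eqP; rewrite eqb0; apply/eqP; lia.
Qed.

Lemma sum_Posz (I : Type) (r : seq I) (P : pred I) (F : I -> nat) :
  \sum_(i <- r | P i) (F i)%:Z = (\sum_(i <- r | P i) F i)%N%:Z.
Proof. by rewrite (big_morph Posz PoszD (erefl 0%:Z)). Qed.

Definition hook_series (k : nat) : fps :=
  fun n => (\sum_(1 <= t < n.+2) summand_coef k t n)%N%:Z.

Lemma hook_seriesE k : (0 < k)%N ->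
  fps_sum_from1
    (fun t => fps_mul (fps_mono ('C(t, 2) * k ^ 2))
                (fps_div (fps_sub fps_one (fps_mono (t * k ^ 2)))
                         (fps_sub fps_one (fps_mono (t * k)))))
    (hook_series k).
Proof.
move=> k0 n; exists n.+2 => M nM.
rewrite big_nat_cond (eq_bigr (fun t => (summand_coef k t n)%:Z)); last first.
  by move=> t /andP[/andP[t0 _] _]; rewrite summand_coefE.
rewrite -big_nat_cond sum_Posz /hook_series (big_cat_nat (n := n.+2)) //=.
rewrite [X in (_ + X)%N]big_nat_cond [X in (_ + X)%N]big1 ?addn0 // => t.
by case/andP=> /andP[nt _] _; apply: summand_coef_eq0.
Qed.

Lemma hook_series_coef k n : (0 < k)%N ->
  fps_div (fps_sub (hook_series k) fps_one) (fps_sub fps_one (fps_mono 1)) n = (b_count k n)%:Z.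
Proof.
move=> k0; rewrite /fps_div /fps_mul.
rewrite (eq_bigr (fun i : 'I_n.+1 => hook_series k i - fps_one i)); last first.
  by move=> i _; rewrite fps_inv_one_sub_mono // dvd1n mulr1.
rewrite sumrB /hook_series sum_Posz sum_summand_coef // /fps_one.
rewrite (eq_bigr (fun i : 'I_n.+1 => if i == 0%N :> nat then 1 else 0)) // -big_mkcond.
by rewrite (big_ord1_eq _ (fun=> 1)) -addn1 PoszD addrK.
Qed.

Theorem theorem1p2 (k : nat) (hk : (1 <= k)%N) :
  exists S : fps,
    fps_sum_from1
      (fun t => fps_mul (fps_mono ('C(t, 2) * k ^ 2))
                  (fps_div (fps_sub fps_one (fps_mono (t * k ^ 2)))
                           (fps_sub fps_one (fps_mono (t * k)))))
      S /\
    forall n : nat,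
      (b n k)%:Z = fps_div (fps_sub S fps_one) (fps_sub fps_one (fps_mono 1)) n.
Proof.
exists (hook_series k); split; first exact: hook_seriesE.
by move=> n; rewrite hook_series_coef // b_eq_b_count.
Qed.
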